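(* For a conditionally stationary process over a finite alphabet, let $\mathcal{S}$ be its causal states and $\mathcal{R}$ the effective states of any partition $\eta$ of histories that is both deterministic and weakly prescient. Then $H[\mathcal{S}] \le H[\mathcal{R}]$; that is, the causal states have minimal statistical complexity among all deterministic, weakly prescient sets of states.
   Context: A discrete-time process $\ldots S_{-1}S_0S_1\ldots$ takes values in a finite alphabet $\mathcal{A}$; $\overleftarrow{S}$ is the semi-infinite past, $\overrightarrow{S}$ the future, $\overrightarrow{S}^L$ its first $L$ symbols. The process is conditionally stationary ($\Pr(\overrightarrow{S}_t\in A\mid\overleftarrow{S}_t=\overleftarrow{s})$ independent of $t$). A partition $\eta$ of histories (effective states, random variable $R=\eta(\overleftarrow{S})$) is prescient if $\Pr(\overrightarrow{S}^L=w\mid R=\eta(\overleftarrow{s}))=\Pr(\overrightarrow{S}^L=w\mid\overleftarrow{S}=\overleftarrow{s})$ for all $L\ge1$, all $w$, a.e. history; weakly prescient if this holds for $L=1$; deterministic if $\eta(\overleftarrow{s}_1)=\eta(\overleftarrow{s}_2)$ implies $\eta(\overleftarrow{s}_1a)=\eta(\overleftarrow{s}_2a)$ for every symbol $a$. The causal states are the cells of the partition in which two histories are equivalent iff they induce the same conditional distribution over all measurable future events; $\mathcal{S}=\epsilon(\overleftarrow{S})$ denotes the causal-state random variable. Statistical complexity of a set of states is the Shannon entropy of the state random variable. *)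

From HB Require Import structures.
From mathcomp Require Import all_boot all_order all_algebra.
From mathcomp Require Import all_classical all_reals all_analysis.
Set Implicit Arguments. Unset Strict Implicit. Unset Printing Implicit Defensive.
Import Order.TTheory GRing.Theory Num.Theory.
Local Open Scope classical_set_scope.
Local Open Scope ring_scope.

(* A history h : seqspace A is read backwards: h 0 is the most recent       *)
(* symbol, h 1 the one before, ...  A future f : seqspace A is read         *)
(* forwards: f 0 is the next symbol, f 1 the one after, ...                 *)
Definition cylinders (A : Type) : set (set (nat -> A)) :=
  [set C | exists (i : nat) (a : A), C = [set h | h i = a]].

Definition seqspace (A : pointedType) := g_sigma_algebraType (@cylinders A).

Definition extend (A : pointedType) (h : seqspace A) (a : A) : seqspace A :=
  fun k => if k is k'.+1 then h k' else a.

Section process.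
Context {R : realType} {d : measure_display} {T : measurableType d}
  {A : pointedType}.

Definition past (X : int -> T -> A) (t : int) (w : T) : seqspace A :=
  fun k => X (t - (k.+1)%:Z) w.

Definition future (X : int -> T -> A) (t : int) (w : T) : seqspace A :=
  fun k => X (t + k%:Z) w.

Definition is_process (X : int -> T -> A) : Prop :=
  forall (t : int) (a : A), measurable (X t @^-1` [set a]).

(* Conditional stationarity: one and the same (regular) conditional
   distribution kappa of the future given the past serves at every time t:
   Pr(S_t-> in F | <-S_t = h) = kappa h F, independently of t. *)
Definition cond_stationary (P : probability T R) (X : int -> T -> A)
    (kappa : R.-pker (seqspace A) ~> (seqspace A)) : Prop :=
  forall (t : int) (B F : set (seqspace A)), measurable B -> measurable F ->
    P (past X t @^-1` B `&` future X t @^-1` F)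
    = (\int[P]_(w in past X t @^-1` B) kappa (past X t w) F)%E.

Definition eff_state {S : Type} (eta : seqspace A -> S) (X : int -> T -> A)
    (t : int) (w : T) : S := eta (past X t w).

Definition cond_prob_state {S : Type} (P : probability T R)
    (X : int -> T -> A) (eta : seqspace A -> S) (t : int) (r : S) (a : A) : R :=
  fine (P (eff_state eta X t @^-1` [set r] `&` X t @^-1` [set a]))
  / fine (P (eff_state eta X t @^-1` [set r])).

Definition measurable_partition {S : Type} (eta : seqspace A -> S) : Prop :=
  forall r : S, measurable (eta @^-1` [set r]).

(* weak prescience: for L = 1, every word (symbol) a, and (at every time t)
   almost every history,  Pr(S_t = a | R_t = eta(h)) = Pr(S_t = a | <-S_t = h) *)
Definition weakly_prescient {S : Type} (P : probability T R)
    (X : int -> T -> A) (kappa : R.-pker (seqspace A) ~> (seqspace A))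
    (eta : seqspace A -> S) : Prop :=
  forall (t : int) (a : A),
    {ae P, forall w : T,
      (cond_prob_state P X eta t (eta (past X t w)) a)%:E
      = kappa (past X t w) [set f | f 0%N = a]}.

Definition deterministic {S : Type} (eta : seqspace A -> S) : Prop :=
  forall h1 h2 : seqspace A, eta h1 = eta h2 ->
    forall a : A, eta (extend h1 a) = eta (extend h2 a).

Definition causal_state (kappa : R.-pker (seqspace A) ~> (seqspace A))
    (h : seqspace A) : set (seqspace A) :=
  [set h' | forall F : set (seqspace A), measurable F -> kappa h' F = kappa h F].

(* Shannon entropy (in bits) of a state random variable f : T -> S.  If the
   distribution of f is discrete (its atoms carry total mass 1) this is
   - sum_r p_r log2 p_r; otherwise the entropy is +oo. *)
Definition entropy {S : choiceType} (P : probability T R) (f : T -> S)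
    : \bar R :=
  let p := fun r : S => fine (P (f @^-1` [set r])) in
  if (\esum_(r in [set: S]) (P (f @^-1` [set r])) == 1)%E
  then \esum_(r in [set: S]) (- (p r * (ln (p r) / ln 2)))%:E
  else +oo%E.

End process.

From HB Require Import structures.
From mathcomp Require Import all_boot all_order all_algebra.
From mathcomp Require Import all_classical all_reals all_analysis.
From mathcomp Require Import measurable_realfun ring lra zify.
Import Order.TTheory GRing.Theory Num.Theory.
Local Open Scope classical_set_scope.
Local Open Scope ring_scope.
Set Implicit Arguments. Unset Strict Implicit. Unset Printing Implicit Defensive.

(* Determinism upgrades weak prescience to prescience.  By conditional
   stationarity, integrating Pr(future_t starts with the word a u | past_t) over
   a set B of histories inside one effective state gives the integral of
   Pr(future_(t+1) starts with u | past_(t+1)) over the histories extending B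
   by a.  By determinism these all lie in one effective state, where the
   integrand is a.e. constant by induction on u; the remaining factor
   Pr(S_t = a | past_t) is a.e. constant on the state by weak prescience.  As
   word cylinders form a pi-system generating the sigma-algebra of futures, the
   causal state is a.e. a function of the effective state.  Such a coarse
   graining cannot increase entropy: a causal state of probability q absorbs
   effective states of probabilities p_i <= q summing to q, and
   - q log q = - sum p_i log q <= - sum p_i log p_i. *)

Section cylinders.
Context {A : pointedType}.
Local Notation H := (seqspace A).

Definition cylinder (u : seq A) : set H :=
  [set h | forall i, (i < size u)%N -> h i = nth point u i].

Definition shift (h : H) : H := fun k => h k.+1.

(* The image of [B] under [extend^~ a]. *)
Definition extend_set (a : A) (B : set H) : set H :=
  [set h | h 0%N = a /\ B (shift h)].

Lemma measurable_coord (i : nat) (a : A) : measurable [set h : H | h i = a].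
Proof. by apply: sub_sigma_algebra; exists i, a. Qed.

Lemma measurable_cylinder u : measurable (cylinder u).
Proof.
have -> : cylinder u = \bigcap_i
    (if (i < size u)%N then [set h : H | h i = nth point u i] else setT).
  apply/seteqP; split => h hu i.
    by move=> _ /=; case: ifP => // /hu.
  by move=> iu; have := hu i I; rewrite /= iu.
apply: bigcapT_measurable => i; case: ifP => _; first exact: measurable_coord.
exact: measurableT.
Qed.

Lemma cylinder_nil : cylinder [::] = setT.
Proof. by apply/seteqP; split => h // _ i. Qed.

Lemma measurable_shift : measurable_fun setT shift.
Proof.
apply: (@measurability _ _ H H _ _ (@cylinders A)) => // _ [_ [i [a ->]] <-].
by rewrite setTI; exact: (measurable_coord i.+1 a).
Qed.

Lemma measurable_extend_set a B : measurable B -> measurable (extend_set a B).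
Proof.
move=> mB; rewrite (_ : extend_set a B = [set h | h 0%N = a] `&` shift @^-1` B) //.
apply: measurableI; first exact: measurable_coord.
by rewrite -[_ @^-1` _]setTI; apply: measurable_shift.
Qed.

Definition cylinder_system : set (set H) :=
  [set C | C = set0 \/ exists u, C = cylinder u].

Lemma cylinder_system_setI_le u v : (size u <= size v)%N ->
  cylinder_system (cylinder u `&` cylinder v).
Proof.
move=> uv.
have [agree|] := pselect (forall i, (i < size u)%N -> nth point u i = nth point v i).
  right; exists v; apply/seteqP; split => h; first by case.
  by move=> hv; split => // i iu; rewrite agree // hv // (leq_trans iu uv).
move=> /existsNP [i /not_implyP [iu neq]]; left.
apply/seteqP; split => h // [hu hv]; apply: neq.
by rewrite -hu // -hv // (leq_trans iu uv).
Qed.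

Lemma setI_closed_cylinder_system : setI_closed cylinder_system.
Proof.
move=> C D [->|[u ->]]; first by rewrite set0I; left.
move=> [->|[v ->]]; first by rewrite setI0; left.
have [uv|vu] := leqP (size u) (size v); first exact: cylinder_system_setI_le.
by rewrite setIC; apply: cylinder_system_setI_le; exact: ltnW.
Qed.

Variable enumA : seq A.
Hypothesis enumAP : forall a : A, a \in enumA.

Definition word_of_nat (k : nat) : seq A :=
  map (nth point enumA) (odflt [::] (unpickle k : option (seq nat))).

Lemma word_of_nat_surj u : exists k, word_of_nat k = u.
Proof.
exists (pickle (map (index^~ enumA) u)); rewrite /word_of_nat pickleK /=.
by rewrite -map_comp -[RHS]map_id; apply: eq_map => a /=; exact: nth_index.
Qed.

Lemma coord_set_bigcup (i : nat) (a : A) :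
  [set h : H | h i = a] =
  \bigcup_k (if (size (word_of_nat k) == i.+1) && (nth point (word_of_nat k) i == a)
             then cylinder (word_of_nat k) else set0).
Proof.
apply/seteqP; split => h /=.
  move=> hia; have [k hk] := word_of_nat_surj (mkseq h i.+1).
  exists k => //; rewrite hk size_mkseq eqxx nth_mkseq // hia eqxx /=.
  by move=> j; rewrite size_mkseq => ji; rewrite nth_mkseq.
move=> [k _]; case: ifP => // /andP[/eqP sk /eqP <-] hk.
by apply: hk; rewrite sk.
Qed.

Lemma measurable_seqspaceE : @measurable _ H = <<s cylinder_system >>.
Proof.
apply/seteqP; split.
  apply: smallest_sub; first exact: smallest_sigma_algebra.
  move=> _ [i [a ->]]; rewrite coord_set_bigcup.
  have [_ _ sigmaU] := @smallest_sigma_algebra _ setT cylinder_system.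
  apply: sigmaU => k; case: ifP => _; apply: sub_sigma_algebra.
    by right; exists (word_of_nat k).
  by left.
apply: smallest_sub; first exact: smallest_sigma_algebra.
move=> _ [->|[u ->]]; last exact: measurable_cylinder.
exact: measurable0.
Qed.

Lemma measure_eq_cylinder {R : realType} (m1 m2 : {measure set H -> \bar R}) :
  (m1 setT < +oo)%E -> (forall u, m1 (cylinder u) = m2 (cylinder u)) ->
  forall F, measurable F -> m1 F = m2 F.
Proof.
move=> m1T m12 F mF.
apply: (measure_unique cylinder_system (fun _ => setT)) => //.
- exact: measurable_seqspaceE.
- exact: setI_closed_cylinder_system.
- by move=> _; right; exists [::]; rewrite cylinder_nil.
- by rewrite bigcup_const.
- by move=> _ [->|[u ->]]; rewrite ?measure0.
Qed.

End cylinders.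

Section process.
Context {d : measure_display} {T : measurableType d} {A : pointedType}.
Local Notation H := (seqspace A).
Variable X : int -> T -> A.
Hypothesis procX : is_process X.

Lemma measurable_past t : measurable_fun setT (past X t).
Proof.
apply: (@measurability _ _ _ H _ _ (@cylinders A)) => // _ [_ [i [a ->]] <-].
by rewrite setTI; exact: procX.
Qed.

Lemma measurable_past_preimage t (B : set H) :
  measurable B -> measurable (past X t @^-1` B).
Proof. by move=> mB; rewrite -[_ @^-1` _]setTI; apply: measurable_past. Qed.

Lemma measurable_eff_state_preimage {S : Type} (eta : H -> S) t r :
  measurable_partition eta -> measurable (eff_state eta X t @^-1` [set r]).
Proof.
move=> mpart; rewrite -[_ @^-1` _]/(past X t @^-1` (eta @^-1` [set r])).
exact: measurable_past_preimage.
Qed.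

Lemma past_addr1 t w : past X (t + 1) w = extend (past X t w) (X t w).
Proof.
apply: funext => -[|k]; rewrite /past /=; congr X; first by ring.
rewrite -[k.+2]addn1 PoszD; ring.
Qed.

Lemma future_preimage_cylinder_cons t (a : A) (u : seq A) :
  future X t @^-1` cylinder (a :: u) =
  X t @^-1` [set a] `&` future X (t + 1) @^-1` cylinder u.
Proof.
have shiftE (i : nat) : t + 1 + i%:Z = t + i.+1%:Z by lia.
apply/seteqP; split => w /=.
  move=> hw; split; first by have := hw 0%N isT; rewrite /future addr0.
  by move=> i iu; have := hw i.+1 iu; rewrite /future shiftE.
move=> [hw1 hw2] [|i] /= iu; first by rewrite /future addr0.
by have := hw2 i iu; rewrite /future shiftE.
Qed.

Lemma future_preimage_head t (a : A) :
  future X t @^-1` [set f : H | f 0%N = a] = X t @^-1` [set a].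
Proof. by apply/seteqP; split => w /=; rewrite /future addr0. Qed.

Lemma past_preimage_extend_set t a B :
  past X (t + 1) @^-1` extend_set a B = past X t @^-1` B `&` X t @^-1` [set a].
Proof.
by apply/seteqP; split => w; rewrite /extend_set /= past_addr1 /= => -[].
Qed.

End process.

Section measure_facts.
Context {d : measure_display} {T : measurableType d} {R : realType}.
Variable P : {finite_measure set T -> \bar R}.

Lemma ae_not_of_measure0 (M : set T) :
  measurable M -> P M = 0%E -> {ae P, forall w, ~ M w}.
Proof. by move=> mM M0; exists M; split => // w /= /contrapT. Qed.

Lemma measure_setI_ae (E G : set T) : measurable E -> measurable G ->
  {ae P, forall w, E w -> G w} -> P (E `&` G) = P E.
Proof.
move=> mE mG EG; rewrite [RHS](measureDI P mE mG).
rewrite (measure_negligible (measurableD mE mG)) ?add0e //.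
by apply: negligibleS EG => w [Ew nGw] /(_ Ew).
Qed.

Lemma measure0_of_le_gap (D : set T) (a b : R) : measurable D -> a < b ->
  (b%:E * P D <= a%:E * P D)%E -> P D = 0%E.
Proof.
move=> mD ab; have PDE := fineK (fin_num_measure P D mD).
rewrite -PDE -!EFinM lee_fin => baD.
have PD0 : 0 <= fine (P D) by apply: fine_ge0; exact: measure_ge0.
suff -> : fine (P D) = 0 by [].
by apply/eqP; rewrite eq_le PD0 andbT; nra.
Qed.

Lemma integral_ae_cst (D : set T) (f : T -> \bar R) (c : \bar R) :
  measurable D -> measurable_fun D f -> {ae P, forall w, D w -> f w = c} ->
  (\int[P]_(w in D) f w = c * P D)%E.
Proof.
move=> mD mf fc; rewrite -integral_cst //.
by apply: ae_eq_integral => //; exact: measurable_cst.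
Qed.

Section ae_cst_of_integral.
Context {d' : measure_display} {H : measurableType d'}.
Variables (phi : T -> H) (k : H -> \bar R) (C : set H) (g : R).
Hypotheses (mphi : measurable_fun setT phi) (mk : measurable_fun setT k)
  (k_ge0 : forall h, (0 <= k h)%E) (mC : measurable C) (g_ge0 : 0 <= g).
Hypothesis integral_sub_C : forall B, measurable B -> B `<=` C ->
  (\int[P]_(w in phi @^-1` B) k (phi w) = g%:E * P (phi @^-1` B))%E.

Let mpre B : measurable B -> measurable (phi @^-1` B).
Proof. by move=> mB; rewrite -[_ @^-1` _]setTI; apply: mphi. Qed.

Let mkphi B : measurable B -> measurable_fun (phi @^-1` B) (k \o phi).
Proof. by move=> mB; apply: measurable_funS (measurableT_comp mk mphi). Qed.

Lemma measure_preimage_above (B : set H) (b : R) : measurable B -> B `<=` C ->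
  g < b -> (forall h, B h -> b%:E <= k h)%E -> P (phi @^-1` B) = 0%E.
Proof.
move=> mB BC gb kb; apply: (measure0_of_le_gap (mpre mB) gb).
rewrite -integral_sub_C // -integral_cst; last exact: mpre.
apply: (ge0_le_integral _ (mpre mB) _ (measurable_cst _) (mkphi mB)).
- by move=> w _; rewrite lee_fin; apply: ltW; exact: le_lt_trans gb.
- by move=> w /kb.
Qed.

Lemma measure_preimage_below (B : set H) (a : R) : measurable B -> B `<=` C ->
  a < g -> (forall h, B h -> k h <= a%:E)%E -> P (phi @^-1` B) = 0%E.
Proof.
move=> mB BC ag ka; apply: (measure0_of_le_gap (mpre mB) ag).
rewrite -integral_sub_C // -integral_cst; last exact: mpre.
exact: (ge0_le_integral _ (mpre mB) (fun w _ => k_ge0 _) (mkphi mB)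
  (measurable_cst _) (fun w => ka (phi w))).
Qed.

Lemma ae_cst_of_integral : {ae P, forall w, C (phi w) -> k (phi w) = g%:E}.
Proof.
(* The parts of [C] where [k] exceeds [g] (resp. stays below [g]) by
   1/(n+1) have null preimage, by the integral identity. *)
pose above n := C `&` [set h | ((g + n.+1%:R^-1)%:E <= k h)%E].
pose below n := C `&` [set h | (k h <= (g - n.+1%:R^-1)%:E)%E].
have inv_gt0 n : 0 < n.+1%:R^-1 :> R by rewrite invr_gt0.
have mkC : measurable_fun C k by exact: measurable_funS mk.
have mabove n : measurable (above n) by exact: emeasurable_fun_c_infty.
have mbelow n : measurable (below n) by exact: emeasurable_fun_infty_c.
have ae_above n : {ae P, forall w, ~ (phi @^-1` above n) w}.
  apply: ae_not_of_measure0; first exact: mpre.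
  apply: (@measure_preimage_above _ (g + n.+1%:R^-1) (mabove n)).
  - by move=> h [].
  - by rewrite ltrDl.
  - by move=> h [].
have ae_below n : {ae P, forall w, ~ (phi @^-1` below n) w}.
  apply: ae_not_of_measure0; first exact: mpre.
  apply: (@measure_preimage_below _ (g - n.+1%:R^-1) (mbelow n)).
  - by move=> h [].
  - by rewrite ltrBlDr ltrDl.
  - by move=> h [].
apply: filterS2 (ae_foralln ae_above) (ae_foralln ae_below) => w notA notB Cw.
have {}notA n : ~ ((g + n.+1%:R^-1)%:E <= k (phi w))%E.
  by move=> gk; apply: (notA n).
have {}notB n : ~ (k (phi w) <= (g - n.+1%:R^-1)%:E)%E.
  by move=> kg; apply: (notB n).
have := k_ge0 (phi w); case: (k (phi w)) notA notB => [x| |] // notA notB _.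
- have [gx|xg|->] := ltgtP g x => //.
  + by have [n /ltW gnx] := ltr_add_invr gx; case: (notA n).
  + have [n /ltW xng] := ltr_add_invr xg.
    by case: (notB n); rewrite lee_fin lerBrDr.
- by case: (notA 0%N); rewrite leey.
Qed.

End ae_cst_of_integral.

End measure_facts.

Section prescience.
Context {R : realType} {d : measure_display} {T : measurableType d}
  {A : pointedType} {S : Type}.
Local Notation H := (seqspace A).
Variables (P : probability T R) (X : int -> T -> A)
  (kappa : R.-pker H ~> H) (eta : H -> S).
Hypotheses (procX : is_process X) (cstat : cond_stationary P X kappa)
  (mpart : measurable_partition eta) (det : deterministic eta)
  (wpresc : weakly_prescient P X kappa eta).

Let mpast t (B : set H) := @measurable_past_preimage _ _ _ X procX t B.

Let mkappa t U : measurable U ->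
  measurable_fun setT (fun w => kappa (past X t w) U).
Proof.
by move=> mU; exact: measurableT_comp (measurable_kernel kappa U mU)
  (measurable_past procX t).
Qed.

Lemma integral_kernel_cylinder_cons t a u (B : set H) : measurable B ->
  (\int[P]_(w in past X t @^-1` B) kappa (past X t w) (cylinder (a :: u)) =
   \int[P]_(w in past X (t + 1) @^-1` extend_set a B)
     kappa (past X (t + 1) w) (cylinder u))%E.
Proof.
move=> mB; rewrite -cstat //; last exact: measurable_cylinder.
rewrite future_preimage_cylinder_cons setIA -past_preimage_extend_set.
by rewrite cstat //; [exact: measurable_extend_set|exact: measurable_cylinder].
Qed.

Lemma measure_past_extend_set t a (B : set H) : measurable B ->
  P (past X (t + 1) @^-1` extend_set a B) =
  (\int[P]_(w in past X t @^-1` B) kappa (past X t w) [set f | f 0%N = a])%E.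
Proof.
move=> mB; rewrite past_preimage_extend_set -future_preimage_head.
by rewrite cstat //; exact: measurable_coord.
Qed.

Lemma prescient_cylinder u t r : exists c : R, 0 <= c /\
  {ae P, forall w, eta (past X t w) = r -> kappa (past X t w) (cylinder u) = c%:E}.
Proof.
elim: u t r => [|a u IH] t r.
  by exists 1; split => //; apply: aeW => w _; rewrite cylinder_nil prob_kernel.
have [[h0 <-]|empty_cell] := pselect (exists h0, eta h0 = r); last first.
  exists 0; split => //; apply: aeW => w er.
  by case: empty_cell; exists (past X t w).
have [c [c0 hc]] := IH (t + 1) (eta (extend h0 a)).
pose p := cond_prob_state P X eta t (eta h0) a.
have p0 : 0 <= p by apply: divr_ge0; apply: fine_ge0; exact: measure_ge0.
exists (c * p); split; first exact: mulr_ge0.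
apply: (ae_cst_of_integral (k := kappa^~ (cylinder (a :: u)))
  (C := eta @^-1` [set eta h0]) (measurable_past procX t)) => //.
- exact: (measurable_kernel kappa _ (measurable_cylinder _)).
- exact: mulr_ge0.
move=> B mB Bcell; rewrite integral_kernel_cylinder_cons //.
rewrite (integral_ae_cst (c := c%:E)); last 3 first.
- exact: mpast (measurable_extend_set _ mB).
- exact: measurable_funS (mkappa _ (measurable_cylinder _)).
- apply: filterS hc => w hw; rewrite past_preimage_extend_set => -[Bw Xw].
  by apply: hw; rewrite past_addr1 Xw; apply: det; exact: Bcell.
(* restate [P] as a probability rather than as the finite measure used above *)
rewrite -[Q in (_ * Q)%E = _]/(P (past X (t + 1) @^-1` extend_set a B)).
rewrite measure_past_extend_set // (integral_ae_cst (c := p%:E)); last 3 first.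
- exact: mpast.
- exact: measurable_funS (mkappa _ (measurable_coord _ _)).
- by apply: filterS (wpresc t a) => w <- Bw; rewrite (Bcell _ Bw).
by rewrite muleA -EFinM.
Qed.

End prescience.

Section causal_states.
Context {R : realType} {d : measure_display} {T : measurableType d}
  {A : pointedType}.
Local Notation H := (seqspace A).
Variables (X : int -> T -> A) (kappa : R.-pker H ~> H).
Hypothesis procX : is_process X.
Variable enumA : seq A.
Hypothesis enumAP : forall a : A, a \in enumA.

Lemma causal_state_eqP h1 h2 :
  causal_state kappa h1 = causal_state kappa h2 <->
  forall F, measurable F -> kappa h1 F = kappa h2 F.
Proof.
split=> [h12|k12]; first by have : causal_state kappa h2 h1 by rewrite -h12 => F.
by apply/seteqP; split => h hh F mF; rewrite hh // k12.
Qed.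

Lemma causal_state_eq_cylinder h1 h2 :
  (forall u, kappa h1 (cylinder u) = kappa h2 (cylinder u)) ->
  causal_state kappa h1 = causal_state kappa h2.
Proof.
move=> k12; apply/causal_state_eqP.
by apply: (measure_eq_cylinder enumAP) k12; rewrite prob_kernel ltey.
Qed.

Lemma measurable_causal_state h0 : measurable (causal_state kappa h0).
Proof.
have -> : causal_state kappa h0 = \bigcap_k
    [set h : H | kappa h (cylinder (word_of_nat enumA k))
                 = kappa h0 (cylinder (word_of_nat enumA k))].
  apply/seteqP; split => h.
    by move=> hh k _; exact: hh _ (measurable_cylinder _).
  move=> hh; apply/causal_state_eqP/causal_state_eq_cylinder => u.
  by have [k <-] := word_of_nat_surj enumAP u; exact: hh.
apply: bigcapT_measurable => k.
rewrite -[Y in measurable Y]setTI.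
exact: measurable_kernel _ _ (measurable_cylinder _) measurableT _
  (emeasurable_set1 _).
Qed.

Lemma measurable_causal_state_preimage t (C : set H) :
  measurable ((fun w => causal_state kappa (past X t w)) @^-1` [set C]).
Proof.
have [[h0 ->]|notcell] := pselect (exists h0, C = causal_state kappa h0).
  rewrite (_ : _ @^-1` _ = past X t @^-1` causal_state kappa h0).
    by apply: measurable_past_preimage => //; exact: measurable_causal_state.
  apply/seteqP; split => w /=; first by move=> <- F.
  by move=> hw; apply/causal_state_eqP => F mF; rewrite hw.
rewrite (_ : _ @^-1` _ = set0) //.
by apply/seteqP; split => w //= wC; apply: notcell; exists (past X t w).
Qed.

End causal_states.

Section causal_state_of_effective_state.
Context {R : realType} {d : measure_display} {T : measurableType d}
  {A : pointedType} {S : Type}.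
Local Notation H := (seqspace A).
Variables (P : probability T R) (X : int -> T -> A)
  (kappa : R.-pker H ~> H) (eta : H -> S).
Hypotheses (procX : is_process X) (cstat : cond_stationary P X kappa)
  (mpart : measurable_partition eta) (det : deterministic eta)
  (wpresc : weakly_prescient P X kappa eta).
Variable enumA : seq A.
Hypothesis enumAP : forall a : A, a \in enumA.

Lemma causal_state_ae_cst t r : exists C : set H,
  {ae P, forall w, eta (past X t w) = r -> causal_state kappa (past X t w) = C}.
Proof.
pose word := word_of_nat enumA.
have /choice [c cP] k := prescient_cylinder procX cstat mpart det wpresc (word k) t r.
have ae_words := ae_foralln (fun k => (cP k).2).
have [[w0 [w0r w0c]]|none] := pselect (exists w0, eta (past X t w0) = r /\
    forall k, kappa (past X t w0) (cylinder (word k)) = (c k)%:E).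
  exists (causal_state kappa (past X t w0)); apply: filterS ae_words => w wc wr.
  apply: (causal_state_eq_cylinder enumAP) => u.
  by have [k <-] := word_of_nat_surj enumAP u; rewrite wc // w0c.
(* otherwise the effective state is null and any witness will do *)
exists set0; apply: filterS ae_words => w wc wr.
by case: none; exists w; split => // k; exact: wc.
Qed.

End causal_state_of_effective_state.

Section entropy_summand.
Context {R : realType}.

Lemma ln2_gt0 : 0 < ln (2 : R).
Proof. by apply: ln_gt0; lra. Qed.

Lemma log2_le0 (x : R) : x <= 1 -> ln x / ln 2 <= 0.
Proof.
move=> x1; rewrite pmulr_lle0 ?invr_gt0 ?ln2_gt0 //.
by have [x0|x0] := leP x 0; [rewrite ln0|exact: ln_le0].
Qed.

Lemma entropy_summand_ge0 (x : R) : x <= 1 -> 0 <= - (x * (ln x / ln 2)).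
Proof.
move=> x1; have [x0|x0] := leP x 0; first by rewrite ln0 // mul0r mulr0 oppr0.
by rewrite -mulrN mulr_ge0 ?oppr_ge0 ?log2_le0 // ltW.
Qed.

Lemma entropy_summand_le_log (p q : R) : 0 <= p -> p <= q ->
  - (p * (ln q / ln 2)) <= - (p * (ln p / ln 2)).
Proof.
rewrite le0r => /predU1P[->|p0 pq]; first by rewrite !mul0r oppr0.
rewrite lerN2 ler_pM2l // ler_pM2r ?invr_gt0 ?ln2_gt0 //.
by rewrite ler_ln // posrE; exact: lt_le_trans pq.
Qed.

End entropy_summand.

Lemma esum_fibers {R : realType} {S C : choiceType} (g : S -> C)
    (a : S -> \bar R) : (forall r, (0 <= a r)%E) ->
  \esum_(c in [set: C]) \esum_(r in g @^-1` [set c]) a r = \esum_(r in [set: S]) a r.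
Proof.
move=> a0; rewrite esum_esum; last by move=> *; exact: a0.
rewrite (reindex_esum [set: S] _ (fun r => (g r, r))) //; split.
- by move=> r _ /=; split.
- by move=> r1 r2 _ _ [].
- by move=> [c r] [_ /= <-]; exists r.
Qed.

Lemma esumMr_le {R : realType} {S : choiceType} (J : set S) (a : S -> \bar R)
    (k : R) : 0 <= k -> (forall r, (0 <= a r)%E) ->
  ((\esum_(r in J) a r) * k%:E <= \esum_(r in J) (a r * k%:E))%E.
Proof.
move=> k0 a0; rewrite muleC /esum -ereal_supZl //; last first.
  by apply/set0P; exists 0%E, set0; [exact: fsets_set0|rewrite fsbig_set0].
apply: ge_ereal_sup => _ [_ [F [finF FJ] <-] <-].
apply: ereal_sup_ubound; exists F => //.
rewrite !fsbig_finite // ge0_sume_distrr //.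
by apply: eq_bigr => r _; rewrite muleC.
Qed.

Section coarsening.
Context {R : realType} {d : measure_display} {T : measurableType d}.
Variable P : probability T R.
Context {S C : choiceType}.
Variables (e : T -> S) (f : T -> C) (g : S -> C).
Hypotheses (me : forall r, measurable (e @^-1` [set r]))
  (mf : forall c, measurable (f @^-1` [set c]))
  (fge : forall r, {ae P, forall w, e w = r -> f w = g r}).

Local Notation E r := (e @^-1` [set r]).
Local Notation F c := (f @^-1` [set c]).

Lemma esum_cells_le (J : set S) (G : set T) : measurable G ->
  (forall r, J r -> {ae P, forall w, e w = r -> G w}) ->
  (\esum_(r in J) P (E r) <= P G)%E.
Proof.
move=> mG JG; apply: ge_ereal_sup => _ [K [finK KJ] <-].
rewrite (eq_fsbigr (fun r => P (E r `&` G))); last first.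
  by move=> r /set_mem /KJ /JG ae_rG; rewrite measure_setI_ae.
rewrite -measure_fin_bigcup //; last by move=> r _; exact: measurableI.
- apply: le_measure; rewrite ?inE //; last by move=> w [r _ []].
  by apply: fin_bigcup_measurable => // r _; exact: measurableI.
- by move=> r1 r2 _ _ [w [[/= <- _] [/= <- _]]].
Qed.

Lemma measure_fiber c : (\esum_(r in [set: S]) P (E r) = 1)%E ->
  P (F c) = \esum_(r in g @^-1` [set c]) P (E r).
Proof.
move=> sumE.
(* Cells over [c] lie a.e. in [F c], the others a.e. outside it; as both the
   esums over these two index sets and [P (F c)], [P (~` F c)] add up to 1,
   the first inequality is an equality. *)
have inF : (\esum_(r in g @^-1` [set c]) P (E r) <= P (F c))%E.
  apply: esum_cells_le => // r /= <-; apply: filterS (fge r) => w.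
  by move=> /[apply] ->.
have notinF : (\esum_(r in ~` (g @^-1` [set c])) P (E r) <= P (~` F c))%E.
  apply: esum_cells_le; first exact: measurableC.
  by move=> r /= grc; apply: filterS (fge r) => w /[apply] ->.
have s2_fin : \esum_(r in ~` (g @^-1` [set c])) P (E r) \is a fin_num.
  rewrite ge0_fin_numE; last by apply: esum_ge0 => *; exact: measure_ge0.
  apply: le_lt_trans notinF _; apply: le_lt_trans (ltey 1).
  exact/probability_le1/measurableC.
rewrite (esumID (g @^-1` [set c])) ?setTI in sumE; last first.
  by move=> *; exact: measure_ge0.
have PF_fin : P (F c) \is a fin_num by exact: fin_num_measure.
rewrite probability_setC // leeBrDl // in notinF.
apply/eqP; rewrite eq_le inF andbT -(leeD2rE _ _ s2_fin) sumE.
exact: notinF.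
Qed.

Lemma entropy_fiber_le c : (\esum_(r in [set: S]) P (E r) = 1)%E ->
  ((- (fine (P (F c)) * (ln (fine (P (F c))) / ln 2)))%:E <=
   \esum_(r in g @^-1` [set c]) (- (fine (P (E r)) * (ln (fine (P (E r))) / ln 2)))%:E)%E.
Proof.
move=> sumE; set q := fine (P (F c)).
have q1 : q <= 1 by rewrite -lee_fin fineK ?fin_num_measure ?probability_le1.
set k := - (ln q / ln 2).
have k0 : 0 <= k by rewrite oppr_ge0 log2_le0.
rewrite -mulrN -/k EFinM /q fineK ?fin_num_measure // measure_fiber //.
apply: le_trans (esumMr_le _ k0 _) _; first by move=> r; exact: measure_ge0.
apply: le_esum => r /= grc.
rewrite -{1}(fineK (fin_num_measure P _ (me r))) -EFinM lee_fin mulrN.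
apply: entropy_summand_le_log; first by apply: fine_ge0; exact: measure_ge0.
rewrite -lee_fin !fineK ?fin_num_measure //.
rewrite -[leLHS](measure_setI_ae (me r) (mf c)).
  apply: le_measure; rewrite ?inE; [exact: measurableI|exact: mf|].
  by move=> w [].
by apply: filterS (fge r) => w fw /fw fwr; rewrite /preimage /= fwr.
Qed.

Lemma entropy_coarsening_le : (entropy P f <= entropy P e)%E.
Proof.
rewrite /entropy /=.
have [sumE|_] := eqVneq (\esum_(r in [set: S]) P (E r)) 1%E; last by rewrite leey.
have fiberE c : P (F c) = \esum_(r in g @^-1` [set c]) P (E r).
  exact: measure_fiber.
rewrite (eq_esum (fun c _ => fiberE c)) esum_fibers ?sumE ?eqxx /=; last first.
  by move=> r; exact: measure_ge0.
rewrite -(esum_fibers g); last first.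
  move=> r; rewrite lee_fin entropy_summand_ge0 //.
  by rewrite -lee_fin fineK ?fin_num_measure ?probability_le1.
by apply: le_esum => c _; exact: entropy_fiber_le.
Qed.

End coarsening.

Theorem mainTheorem2 (R : realType) (d : measure_display) (T : measurableType d)
    (P : probability T R) (A : pointedType) (finA : finite_set [set: A])
    (X : int -> T -> A) (kappa : R.-pker (seqspace A) ~> (seqspace A))
    (S : choiceType) (eta : seqspace A -> S) :
  is_process X ->
  cond_stationary P X kappa ->
  measurable_partition eta ->
  deterministic eta ->
  weakly_prescient P X kappa eta ->
  forall t : int,
    (entropy P (fun w => causal_state kappa (past X t w))
     <= entropy P (eff_state eta X t))%E.
Proof.
move=> procX cstat mpart det wpresc t.
have [enumA enumAE] := (finite_fsetP (A := [set: A])).1 finA.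
have enumAP (a : A) : a \in finmap.enum_fset enumA.
  by have : [set: A] a by []; rewrite enumAE.
have /choice [g gP] r := causal_state_ae_cst procX cstat mpart det wpresc enumAP t r.
apply: (entropy_coarsening_le (g := g)) => // [r|C].
- exact: measurable_eff_state_preimage.
- exact: (measurable_causal_state_preimage _ procX enumAP).
Qed.
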